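(* Let $k>0$ and let $p(n,j;k),q(n,j;k)$ be as in the context. Define $P_n(x;k)=\sum_{j=0}^{\lfloor (n-1)/2\rfloor}p(n,j;k)x^j(1+x)^{n-1-2j}$ and $Q_n(x;k)=\sum_{j=0}^{\lfloor n/2\rfloor}q(n,j;k)x^j(1+x)^{n-2j}$, so $P_0(x;k)=0$, $Q_0(x;k)=1$. Then for $n\ge0$ (terms with factor $n$ being $0$ when $n=0$) $$P_{n+1}(x;k)=(1+(2kn-2k+1)x)P_n(x;k)+2kx(1-x)P_n'(x;k)+2knxP_{n-1}(x;k)+Q_n(x;k),$$ $$Q_{n+1}(x;k)=2knxQ_n(x;k)+2kx(1-x)Q_n'(x;k)+2knxQ_{n-1}(x;k)+(2k-1)xP_n(x;k),$$ where $'$ denotes $d/dx$.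
   Context: The numbers $p(n,j;k),q(n,j;k)$ ($n\ge0$, $j\in\mathbb{Z}$) are determined by $q(0,0;k)=1$, $q(0,j;k)=0$ for $j\ne0$, $p(0,j;k)=0$ for all $j$, $p(n,j;k)=q(n,j;k)=0$ for $j<0$, and for $n\ge0$: $p(n+1,j;k)=(1+2kj)p(n,j;k)+4k(n-2j+1)p(n,j-1;k)+2kn\,p(n-1,j-1;k)+q(n,j;k)$ and $q(n+1,j;k)=2kj\,q(n,j;k)+4k(n-2j+2)q(n,j-1;k)+2kn\,q(n-1,j-1;k)+(2k-1)p(n,j-1;k)$ (terms with factor $n$ vanish when $n=0$). *)

From mathcomp Require Import all_boot all_order all_algebra.
Set Implicit Arguments. Unset Strict Implicit. Unset Printing Implicit Defensive.
Import Order.TTheory GRing.Theory Num.Theory.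
Local Open Scope ring_scope.

Section PQ.
Variable R : realFieldType.
Variable k : R.

(* coefficient families indexed by j : nat; the value at j < 0 is 0 *)
Definition coefs := ((nat -> R) * (nat -> R))%type.

Definition shift1 (f : nat -> R) (j : nat) : R :=
  if j is j'.+1 then f j' else 0.

(* values at n+1 from values at n-1 (prev) and n (cur) *)
Definition pq_step (n : nat) (prev cur : coefs) : coefs :=
  let: (pp, qp) := prev in
  let: (pc, qc) := cur in
  (fun j => (1 + 2 * k * j%:R) * pc j
            + 4 * k * (n%:R - 2 * j%:R + 1) * shift1 pc j
            + 2 * k * n%:R * shift1 pp j + qc j,
   fun j => 2 * k * j%:R * qc j
            + 4 * k * (n%:R - 2 * j%:R + 2) * shift1 qc j
            + 2 * k * n%:R * shift1 qp j + (2 * k - 1) * shift1 pc j).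

Definition pq0 : coefs := (fun _ => 0, fun j => if j == 0%N then 1 else 0).
Definition zero_coefs : coefs := (fun _ => 0, fun _ => 0).

(* pq_aux n = (values at n, values at n+1) *)
Fixpoint pq_aux (n : nat) : coefs * coefs :=
  match n with
  | 0%N => (pq0, pq_step 0 zero_coefs pq0)
  | n'.+1 => let: (a, b) := pq_aux n' in (b, pq_step n'.+1 a b)
  end.

Definition pcoef (n j : nat) : R := (pq_aux n).1.1 j.
Definition qcoef (n j : nat) : R := (pq_aux n).1.2 j.

Definition Ppoly (n : nat) : {poly R} :=
  \sum_(j < ((n.-1)./2).+1)
     pcoef n j *: ('X ^+ j * (1 + 'X) ^+ (n.-1 - 2 * j)).
Definition Qpoly (n : nat) : {poly R} :=
  \sum_(j < (n./2).+1)
     qcoef n j *: ('X ^+ j * (1 + 'X) ^+ (n - 2 * j)).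
End PQ.

(* Write B(j,m) = x^j (1+x)^m.  On a term of total degree d = m + 2j the
   operator f |-> d x f + x(1-x) f' acts by the two-term formula
     B(j,m) |-> j B(j,m+1) + 2m B(j+1,m-1)                [gamma_term_deriv].
   P_n and Q_n are sums of such terms of degree n-1 and n, and by this formula
   the right-hand sides of both recurrences act on their coefficients exactly
   as the recurrences for p(n,j;k) and q(n,j;k) do.  What makes the index
   bookkeeping work is that p(n,j;k) = 0 for 2j >= n and q(n,j;k) = 0 for
   2j > n, so all sums may be taken over a common range.  The identities are
   polynomial in k. *)

From mathcomp Require Import all_boot all_order all_algebra.
From mathcomp Require Import ring zify.
Set Implicit Arguments. Unset Strict Implicit. Unset Printing Implicit Defensive.
Import GRing.Theory.
Local Open Scope ring_scope.

Section GammaExpansion.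
Variable R : comNzRingType.

Definition gamma_term (j m : nat) : {poly R} := 'X^j * (1 + 'X) ^+ m.

Definition gamma_sum (d : nat) (c : nat -> R) : {poly R} :=
  \sum_(j < (d./2).+1) c j *: gamma_term j (d - 2 * j).

Definition shift_coef (c : nat -> R) (j : nat) : R :=
  if j is i.+1 then c i else 0.

Definition gamma_supported (d : nat) (c : nat -> R) : Prop :=
  forall j, (d < 2 * j)%N -> c j = 0.

Lemma gamma_term_deriv (j m : nat) :
  (m + 2 * j)%:R *: ('X * gamma_term j m)
    + 'X * (1 - 'X) * (gamma_term j m)^`()
  = j%:R *: gamma_term j m.+1 + (2 * m%:R) *: gamma_term j.+1 m.-1.
Proof.
rewrite /gamma_term derivM derivXn deriv_exp derivD derivC derivX add0r mul1r.
rewrite -!mul_polyC !(natrD, natrM) !polyCD !polyCM !polyC_natr.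
case: j => [|j]; case: m => [|m]; rewrite /= ?exprS ?mulrS; ring.
Qed.

Lemma eq_gamma_sum d c1 c2 : c1 =1 c2 -> gamma_sum d c1 = gamma_sum d c2.
Proof. by move=> c12; apply: eq_bigr => j _; rewrite c12. Qed.

Lemma gamma_sumD d c1 c2 :
  gamma_sum d (fun j => c1 j + c2 j) = gamma_sum d c1 + gamma_sum d c2.
Proof. by rewrite -big_split; apply: eq_bigr => j _; rewrite scalerDl. Qed.

Lemma gamma_sumZ d a c :
  gamma_sum d (fun j => a * c j) = a *: gamma_sum d c.
Proof. by rewrite scaler_sumr; apply: eq_bigr => j _; rewrite scalerA. Qed.

Lemma gamma_sum_widen d c N : gamma_supported d c -> (d./2 < N)%N ->
  gamma_sum d c = \sum_(j < N) c j *: gamma_term j (d - 2 * j).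
Proof.
move=> suppc ltdN; rewrite /gamma_sum.
rewrite (big_ord_widen _ (fun j => c j *: gamma_term j (d - 2 * j)) ltdN) big_mkcond.
apply: eq_bigr => j _; case: ifPn => // /negbTE jd.
by rewrite suppc ?scale0r //; move: jd; rewrite -divn2; lia.
Qed.

Lemma gamma_sum_mulX d c : 'X * gamma_sum d c = gamma_sum d.+2 (shift_coef c).
Proof.
rewrite /gamma_sum [RHS]big_ord_recl /= scale0r add0r mulr_sumr.
apply: eq_bigr => j _; rewrite /bump /= add1n -scalerAr /gamma_term mulrA -exprS.
by congr (_ *: (_ * _ ^+ _)); lia.
Qed.

Lemma gamma_sum_mul1DX d c : gamma_supported d c ->
  (1 + 'X) * gamma_sum d c = gamma_sum d.+1 c.
Proof.
move=> suppc; have suppSc : gamma_supported d.+1 c.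
  by move=> j ltdj; apply: suppc; lia.
rewrite (gamma_sum_widen (N := d.+1) suppc) ?ltn_half_double; last lia.
rewrite (gamma_sum_widen (N := d.+1) suppSc) ?ltn_half_double; last lia.
rewrite mulr_sumr; apply: eq_bigr => -[j /= _] _.
have [ltdj | lejd] := ltnP d (2 * j); first by rewrite suppc ?scale0r ?mulr0.
by rewrite -scalerAr /gamma_term mulrCA -exprS subSn.
Qed.

Definition deriv_coef (d : nat) (c : nat -> R) (j : nat) : R :=
  j%:R * c j + 2 * (d%:R - 2 * j%:R + 2) * shift_coef c j.

Lemma gamma_supported_deriv_coef d c :
  gamma_supported d c -> gamma_supported d.+1 (deriv_coef d c).
Proof.
move=> suppc [|j] //= ltdj; rewrite /deriv_coef (suppc j.+1) ?mulr0 ?add0r /=; last lia.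
have [ltdj' | lejd] := ltnP d (2 * j); first by rewrite suppc ?mulr0.
have -> : d = (2 * j)%N by lia.
by rewrite natrM mulrS; ring.
Qed.

Lemma gamma_sum_deriv d c : gamma_supported d c ->
  d%:R *: ('X * gamma_sum d c) + 'X * (1 - 'X) * (gamma_sum d c)^`()
  = gamma_sum d.+1 (deriv_coef d c).
Proof.
move=> suppc; have suppe := gamma_supported_deriv_coef suppc.
rewrite (gamma_sum_widen (N := d.+1) suppc) ?ltn_half_double; last lia.
rewrite (gamma_sum_widen (N := d.+2) suppe) ?ltn_half_double; last lia.
under [RHS]eq_bigr do rewrite scalerDl.
rewrite [RHS]big_split /= [X in _ = X + _]big_ord_recr [X in _ = _ + X]big_ord_recl /=.
rewrite (suppc d.+1) ?mulr0 ?scale0r; last lia.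
rewrite addr0 add0r raddf_sum !mulr_sumr scaler_sumr -!big_split /=.
apply: eq_bigr => -[j /= _] _; rewrite /bump /= add1n.
have [ltdj | lejd] := ltnP d (2 * j).
  by rewrite suppc // !(mulr0, scale0r, scaler0, deriv0, addr0).
have {lejd} -> : d = ((d - 2 * j) + 2 * j)%N by lia.
move: (d - 2 * j)%N => m.
have -> : (m + 2 * j - 2 * j = m)%N by lia.
have -> : ((m + 2 * j).+1 - 2 * j = m.+1)%N by lia.
have -> : ((m + 2 * j).+1 - 2 * j.+1 = m.-1)%N by lia.
have -> : 2 * ((m + 2 * j)%:R - 2 * j.+1%:R + 2) = 2 * m%:R :> R.
  by rewrite natrD natrM mulrS; ring.
rewrite add0n derivZ; transitivity (c j *: ((m + 2 * j)%:R *: ('X * gamma_term j m)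
    + 'X * (1 - 'X) * (gamma_term j m)^`())).
  by rewrite -!mul_polyC; ring.
by rewrite gamma_term_deriv -!mul_polyC !polyCM; ring.
Qed.

End GammaExpansion.

Section PQRecurrences.
Variable R : realFieldType.
Variable k : R.

Lemma pcoef_rec n j : pcoef k n.+1 j =
  (1 + 2 * k * j%:R) * pcoef k n j
  + 4 * k * (n%:R - 2 * j%:R + 1) * shift_coef (pcoef k n) j
  + 2 * k * n%:R * shift_coef (pcoef k n.-1) j + qcoef k n j.
Proof.
rewrite /pcoef /qcoef; case: n => [|n] /=; last by case: (pq_aux k n) => [[? ?] [? ?]].
by case: j => [|j] /=; ring.
Qed.

Lemma qcoef_rec n j : qcoef k n.+1 j =
  2 * k * j%:R * qcoef k n j
  + 4 * k * (n%:R - 2 * j%:R + 2) * shift_coef (qcoef k n) j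
  + 2 * k * n%:R * shift_coef (qcoef k n.-1) j
  + (2 * k - 1) * shift_coef (pcoef k n) j.
Proof.
rewrite /pcoef /qcoef; case: n => [|n] /=; last by case: (pq_aux k n) => [[? ?] [? ?]].
by case: j => [|j] /=; ring.
Qed.

Definition pq_supported n :=
  (forall j, (n <= 2 * j)%N -> pcoef k n j = 0) /\
  (forall j, (n < 2 * j)%N -> qcoef k n j = 0).

Lemma pq_supported_step n :
  pq_supported n.-1 -> pq_supported n -> pq_supported n.+1.
Proof.
move=> [p1 q1] [p0 q0]; split=> -[|j] ltnj //=.
- rewrite pcoef_rec /= (p0 j.+1) ?(q0 j.+1); [|lia|lia].
  rewrite (p1 j); last by case: n ltnj {p1 q1 p0 q0} => //= n; lia.
  have [lenj|->] : (n <= 2 * j)%N \/ n = (2 * j).+1 by lia.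
    by rewrite (p0 j) //; ring.
  by rewrite -!natr1 natrM; ring.
- rewrite qcoef_rec /= (q0 j.+1) ?(p0 j); [|lia|lia].
  case: n => [|n] in p1 q1 p0 q0 ltnj *.
    have [->|j_gt0] := posnP j; first ring.
    by rewrite q0 ?muln_gt0 //; ring.
  rewrite (q1 j) /=; last lia.
  have [ltnj'|->] : (n.+1 < 2 * j)%N \/ n.+1 = (2 * j)%N by lia.
    by rewrite (q0 j) //; ring.
  by rewrite natrM; ring.
Qed.

Lemma pq_supported_all n : pq_supported n.
Proof.
suff [] : pq_supported n /\ pq_supported n.+1 by [].
elim: n => [|n [IHn IHSn]]; last by split; last exact: pq_supported_step.
have supp0 : pq_supported 0 by split=> -[|j].
by split; last exact: (@pq_supported_step 0 supp0 supp0).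
Qed.

Lemma pcoef_supported n : gamma_supported n (pcoef k n.+1).
Proof. by move=> j; apply: (pq_supported_all _).1. Qed.

Lemma qcoef_supported n : gamma_supported n (qcoef k n).
Proof. by move=> j; apply: (pq_supported_all _).2. Qed.

Lemma Qpoly_gammaE n : Qpoly k n = gamma_sum n (qcoef k n).
Proof. by []. Qed.

Lemma Ppoly0 : Ppoly k 0 = 0.
Proof. by rewrite /Ppoly big_ord1 /= scale0r. Qed.

Lemma Qpoly0 : Qpoly k 0 = 1.
Proof. by rewrite /Qpoly big_ord1 /= scale1r /gamma_term mulr1. Qed.

Lemma Ppoly1 : Ppoly k 1 = 1.
Proof.
have p10 : pcoef k 1 0 = 1 by rewrite /pcoef /=; ring.
by rewrite /Ppoly big_ord1 /= p10 scale1r mulr1.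
Qed.

Lemma Qpoly1 : Qpoly k 1 = 0.
Proof.
have q10 : qcoef k 1 0 = 0 by rewrite /qcoef /=; ring.
by rewrite /Qpoly big_ord1 q10 scale0r.
Qed.

Lemma Ppoly_mulX n : 'X * Ppoly k n = gamma_sum n.+1 (shift_coef (pcoef k n)).
Proof.
case: n => [|n]; last exact: gamma_sum_mulX.
by rewrite Ppoly0 mulr0 /gamma_sum big_ord1 /= scale0r.
Qed.

Lemma Ppoly_rec n : Ppoly k n.+1 =
    (1 + (2 * k * n%:R - 2 * k + 1) *: 'X) * Ppoly k n
    + (2 * k) *: ('X * (1 - 'X) * (Ppoly k n)^`())
    + (2 * k * n%:R) *: ('X * Ppoly k n.-1)
    + Qpoly k n.
Proof.
case: n => [|n].
  by rewrite Ppoly1 Ppoly0 Qpoly0 deriv0 !(mulr0, scaler0, add0r).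
have -> : Ppoly k n.+2 = (1 + 'X) * Ppoly k n.+1
    + (2 * k) *: (n%:R *: ('X * Ppoly k n.+1) + 'X * (1 - 'X) * (Ppoly k n.+1)^`())
    + (2 * k * n.+1%:R) *: ('X * Ppoly k n) + Qpoly k n.+1.
  rewrite gamma_sum_mul1DX ?gamma_sum_deriv ?Ppoly_mulX; try exact: pcoef_supported.
  rewrite Qpoly_gammaE -!gamma_sumZ -!gamma_sumD; apply: eq_gamma_sum => j.
  by rewrite /deriv_coef pcoef_rec -natr1; ring.
rewrite -!mul_polyC !(polyCD, polyCM, polyCB, polyC_natr) -!natr1 /=; ring.
Qed.

Lemma Qpoly_rec n : Qpoly k n.+1 =
    (2 * k * n%:R) *: ('X * Qpoly k n)
    + (2 * k) *: ('X * (1 - 'X) * (Qpoly k n)^`())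
    + (2 * k * n%:R) *: ('X * Qpoly k n.-1)
    + (2 * k - 1) *: ('X * Ppoly k n).
Proof.
case: n => [|n].
  rewrite Qpoly1 Qpoly0 Ppoly0 -polyC1 derivC -!mul_polyC.
  by rewrite !(polyCD, polyCM, polyCB, polyC_natr); ring.
have -> : Qpoly k n.+2 =
    (2 * k) *: (n.+1%:R *: ('X * Qpoly k n.+1) + 'X * (1 - 'X) * (Qpoly k n.+1)^`())
    + (2 * k * n.+1%:R) *: ('X * Qpoly k n) + (2 * k - 1) *: ('X * Ppoly k n.+1).
  rewrite gamma_sum_deriv ?gamma_sum_mulX; last exact: qcoef_supported.
  rewrite Qpoly_gammaE -!gamma_sumZ -!gamma_sumD; apply: eq_gamma_sum => j.
  by rewrite /deriv_coef qcoef_rec; ring.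
rewrite -!mul_polyC !(polyCD, polyCM, polyCB, polyC_natr) /=; ring.
Qed.

End PQRecurrences.

Theorem corollary14 (R : realFieldType) (k : R) (hk : 0 < k) (n : nat) :
  Ppoly k n.+1 =
    (1 + (2 * k * n%:R - 2 * k + 1) *: 'X) * Ppoly k n
    + (2 * k) *: ('X * (1 - 'X) * (Ppoly k n)^`())
    + (2 * k * n%:R) *: ('X * Ppoly k n.-1)
    + Qpoly k n
  /\
  Qpoly k n.+1 =
    (2 * k * n%:R) *: ('X * Qpoly k n)
    + (2 * k) *: ('X * (1 - 'X) * (Qpoly k n)^`())
    + (2 * k * n%:R) *: ('X * Qpoly k n.-1)
    + (2 * k - 1) *: ('X * Ppoly k n).
Proof. by split; [exact: Ppoly_rec | exact: Qpoly_rec]. Qed.
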